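(* Let $p\in(1,5)$ and $\beta(p)=(2(p+1))^{\frac1{p-1}}$. Then for all $x\in\mathbb{R}$: $$f_1(x,0)=f_3(-x,0)=-\beta(p)^{-1}\phi'(x),$$ $$\partial_\lambda f_1(x,0)=\beta(p)^{-1}\Big(\tfrac1{p-1}\phi'(x)+\Lambda_p\phi(x)\Big),\qquad\partial_\lambda f_3(x,0)=\beta(p)^{-1}\Big(\tfrac1{p-1}\phi'(x)-\Lambda_p\phi(x)\Big).$$
   Context: $\phi(x)=\left(\frac{p+1}{2}\right)^{\frac1{p-1}}\mathrm{sech}^{\frac2{p-1}}\left(\frac{p-1}2x\right)$, $\Lambda_p=\frac12x\partial_x+\frac1{p-1}$. For $\lambda$ near $0$, let $\mu_1(\lambda),\mu_2(\lambda),\mu_3(\lambda)$ be the roots of $\mu^3-\mu+\lambda=0$, analytic in $\lambda$, with $\mu_1(0)=-1,\mu_2(0)=0,\mu_3(0)=1$. Set $a_1=\frac1{(\mu_1-\mu_2)(\mu_1-\mu_3)}$, $a_2=\frac1{(\mu_2-\mu_1)(\mu_2-\mu_3)}$, $a_3=\frac1{(\mu_1-\mu_3)(\mu_2-\mu_3)}$. The Jost functions are $f_1(x,\lambda)=e^{\mu_1x}m_1(x,\lambda)$ and $f_3(x,\lambda)=e^{\mu_3x}m_3(x,\lambda)$, where $m_1,m_3$ are the bounded solutions of the Volterra equations $$m_1(x,\lambda)=1+\int_x^{\infty}\sum_{j=1}^3a_j\mu_je^{(\mu_j-\mu_1)(x-y)}\,p\phi(y)^{p-1}m_1(y,\lambda)\,dy,$$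 $$m_3(x,\lambda)=1-\int_{-\infty}^x\sum_{j=1}^3a_j\mu_je^{(\mu_j-\mu_3)(x-y)}\,p\phi(y)^{p-1}m_3(y,\lambda)\,dy;$$ these solve $\partial_x(-\partial_x^2+1-p\phi^{p-1})f=\lambda f$ and depend smoothly on $\lambda$. *)

From Stdlib Require Import Reals.
From Coquelicot Require Import Coquelicot.
Open Scope R_scope.

Definition sech (x : R) : R := 2 / (exp x + exp (- x)).

Definition phi (p x : R) : R :=
  Rpower ((p + 1) / 2) (1 / (p - 1)) * Rpower (sech ((p - 1) / 2 * x)) (2 / (p - 1)).

Definition Lambda_phi (p x : R) : R :=
  1 / 2 * x * Derive (phi p) x + 1 / (p - 1) * phi p x.

Definition beta (p : R) : R := Rpower (2 * (p + 1)) (1 / (p - 1)).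

Definition pot (p y : R) : R := p * Rpower (phi p y) (p - 1).

Definition a1 (m1 m2 m3 : R) : R := 1 / ((m1 - m2) * (m1 - m3)).
Definition a2 (m1 m2 m3 : R) : R := 1 / ((m2 - m1) * (m2 - m3)).
Definition a3 (m1 m2 m3 : R) : R := 1 / ((m1 - m3) * (m2 - m3)).

Definition kernel (m1 m2 m3 muk x y : R) : R :=
  a1 m1 m2 m3 * m1 * exp ((m1 - muk) * (x - y))
  + a2 m1 m2 m3 * m2 * exp ((m2 - muk) * (x - y))
  + a3 m1 m2 m3 * m3 * exp ((m3 - muk) * (x - y)).

(* mu1, mu2, mu3 are the branches of roots of mu^3 - mu + lambda = 0 on (-delta, delta),
   continuous, with mu1(0) = -1, mu2(0) = 0, mu3(0) = 1 (this determines them uniquely;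
   they are then analytic). *)
Definition root_branches (delta : R) (mu1 mu2 mu3 : R -> R) : Prop :=
  mu1 0 = -1 /\ mu2 0 = 0 /\ mu3 0 = 1 /\
  (forall l, Rabs l < delta ->
     mu1 l ^ 3 - mu1 l + l = 0 /\ mu2 l ^ 3 - mu2 l + l = 0 /\ mu3 l ^ 3 - mu3 l + l = 0 /\
     continuous mu1 l /\ continuous mu2 l /\ continuous mu3 l).

Definition is_m1 (p : R) (mu1 mu2 mu3 : R -> R) (l : R) (m : R -> R) : Prop :=
  (exists M, forall x, Rabs (m x) <= M) /\
  (forall x, is_RInt_gen
     (fun y => kernel (mu1 l) (mu2 l) (mu3 l) (mu1 l) x y * pot p y * m y)
     (at_point x) (Rbar_locally p_infty) (m x - 1)).

Definition is_m3 (p : R) (mu1 mu2 mu3 : R -> R) (l : R) (m : R -> R) : Prop :=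
  (exists M, forall x, Rabs (m x) <= M) /\
  (forall x, is_RInt_gen
     (fun y => kernel (mu1 l) (mu2 l) (mu3 l) (mu3 l) x y * pot p y * m y)
     (Rbar_locally m_infty) (at_point x) (1 - m x)).

(* Write zeta = e^{-(p-1)y}. Then phi = beta e^{-y} (1 + zeta)^{-2/(p-1)}, and the
   potential p phi^{p-1} = 2p(p+1) zeta / (1 + zeta)^2 has tail integrals bounded by
   2p(p+1)/(p-1).  At lambda = 0 the Volterra equation for m1 and its formal
   lambda-derivative are solved explicitly by m0 = e^x f1(x,0) and dm0, which is checked
   by exhibiting primitives.  The kernel of the equation differs from its first-order
   Taylor polynomial in lambda by o(lambda), uniformly in x <= y, so the remainder
   m1(., lambda) - m0 - lambda dm0 is a bounded approximate solution of a Volterra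
   equation with a source of size o(lambda); a Gronwall argument then makes the
   remainder o(lambda) uniformly in x, which gives f1(x,0) and its lambda-derivative.
   The reflection x -> -x, lambda -> -lambda maps the roots (mu1, mu2, mu3) to
   (-mu3, -mu2, -mu1), turns the equation for m3 into the one for m1, and leaves phi
   invariant, so the statements on f3 follow from those on f1. *)

From Stdlib Require Import Reals Lra.
From Coquelicot Require Import Coquelicot.
Open Scope R_scope.

(** * Calculus on the real line *)

Lemma is_derive_iff_small_o (f : R -> R) a v :
  is_derive f a v <->
  forall eps, 0 < eps -> exists d, 0 < d /\
    forall h, Rabs h < d -> Rabs (f (a + h) - f a - h * v) <= eps * Rabs h.
Proof.
  rewrite is_derive_Reals. split.
  - intros Hf eps Heps. destruct (Hf eps Heps) as [d Hd].
    exists d. split; [apply cond_pos|]. intros h Hh.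
    destruct (Req_dec h 0) as [->|Hh0].
    { rewrite Rplus_0_r, Rmult_0_l, Rminus_diag, Rminus_0_r, !Rabs_R0. lra. }
    specialize (Hd h Hh0 Hh).
    replace (f (a + h) - f a - h * v) with (h * ((f (a + h) - f a) / h - v)) by (field; auto).
    rewrite Rabs_mult, Rmult_comm. apply Rmult_le_compat_r; [apply Rabs_pos | lra].
  - intros Hf eps Heps. destruct (Hf (eps / 2) ltac:(lra)) as [d [Hd Hb]].
    exists (mkposreal d Hd). intros h Hh0 Hh. simpl in Hh.
    specialize (Hb h Hh). pose proof (Rabs_pos_lt h Hh0).
    replace ((f (a + h) - f a) / h - v) with ((f (a + h) - f a - h * v) / h) by (field; auto).
    unfold Rdiv. rewrite Rabs_mult, Rabs_inv.
    apply (Rmult_lt_reg_r (Rabs h)); auto.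
    rewrite Rmult_assoc, Rinv_l, Rmult_1_r by lra. nra.
Qed.

Lemma exp_le_mono a b : a <= b -> exp a <= exp b.
Proof. intros [H | ->]; [left; apply exp_increasing; auto | lra]. Qed.

Lemma exp_lipschitz_nonpos a b t : 1 / 2 <= a -> 1 / 2 <= b -> t <= 0 ->
  Rabs (exp (a * t) - exp (b * t)) <= 2 * Rabs (a - b).
Proof.
  intros Ha Hb Ht.
  assert (Hte : - t * exp (t / 2) <= 2).
  { pose proof (exp_ineq1_le (- t / 2)). pose proof (exp_pos (t / 2)).
    assert (exp (t / 2) * exp (- t / 2) = 1)
      by (rewrite <- exp_plus, <- exp_0; f_equal; field).
    nra. }
  assert (Key : forall a b, 1 / 2 <= a -> a <= b ->
            Rabs (exp (a * t) - exp (b * t)) <= 2 * Rabs (a - b)).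
  { clear a b Ha Hb. intros a b Ha Hab.
    assert (Hmono : exp (b * t) <= exp (a * t)) by (apply exp_le_mono; nra).
    assert (Hmvt : exp (a * t) - exp (b * t) <= (b - a) * (- t) * exp (a * t)).
    { pose proof (exp_ineq1_le ((b - a) * t)) as H. pose proof (exp_pos (a * t)).
      replace (exp (b * t)) with (exp (a * t) * exp ((b - a) * t))
        by (rewrite <- exp_plus; f_equal; ring).
      nra. }
    assert (- t * exp (a * t) <= 2).
    { assert (exp (a * t) <= exp (t / 2)) by (apply exp_le_mono; nra). nra. }
    rewrite Rabs_pos_eq by lra. rewrite Rabs_minus_sym, Rabs_pos_eq by lra. nra. }
  destruct (Rle_dec a b); [apply Key; auto|].
  rewrite Rabs_minus_sym, (Rabs_minus_sym a). apply Key; lra.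
Qed.

Lemma is_RInt_gen_primitive_pinfty (f F : R -> R) (a L : R) :
  (forall y, is_derive F y (f y)) -> (forall y, continuous f y) ->
  is_lim F p_infty L ->
  is_RInt_gen f (at_point a) (Rbar_locally p_infty) (L - F a).
Proof.
  intros HF Hf HL P [eps HP].
  apply is_lim_spec in HL. destruct (HL eps) as [M HM].
  exists (fun u => u = a) (fun b => M < b); [reflexivity | exists M; auto |].
  intros u b -> Hb. exists (F b - F a). split.
  - apply (is_RInt_derive F f); auto.
  - apply HP. specialize (HM b Hb).
    unfold ball; simpl; unfold AbsRing_ball, abs, minus, plus, opp; simpl.
    replace (F b - F a + - (L - F a)) with (F b - L) by ring. exact HM.
Qed.

Lemma is_RInt_gen_pinfty_truncate (f : R -> R) (a L : R) :
  is_RInt_gen f (at_point a) (Rbar_locally p_infty) L ->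
  forall eta, 0 < eta -> exists M, forall b, M < b ->
    exists I, is_RInt f a b I /\ Rabs (I - L) < eta.
Proof.
  intros H eta Heta.
  destruct (H (fun I => Rabs (I - L) < eta)) as [Q R' HQ [M HM] HP].
  { exists (mkposreal eta Heta). intros I HI. exact HI. }
  exists M. intros b Hb. exact (HP a b HQ (HM b Hb)).
Qed.

Lemma is_lim_mult_finite (f g : R -> R) x (a b : R) :
  is_lim f x a -> is_lim g x b -> is_lim (fun y => f y * g y) x (a * b).
Proof. intros Hf Hg. exact (is_lim_mult f g x a b Hf Hg I). Qed.

Lemma is_lim_exp_affine_pinfty a b : a < 0 -> is_lim (fun y => exp (a * y + b)) p_infty 0.
Proof.
  intros Ha. apply (is_lim_comp_lin exp a b p_infty 0); [|lra].
  replace (Rbar_plus (Rbar_mult a p_infty) b) with m_infty; [apply is_lim_exp_m|].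
  rewrite Rbar_mult_comm. simpl. case Rle_dec; intro Hd; [exfalso; lra | reflexivity].
Qed.

Lemma is_derive_comp_opp (f : R -> R) a v :
  is_derive f (- a) v -> is_derive (fun y => f (- y)) a (- v).
Proof.
  intros Hf. replace (- v) with (scal (-1) v) by (unfold scal; simpl; unfold mult; simpl; ring).
  apply (is_derive_comp f Ropp); auto.
  apply (is_derive_ext (fun y => - y)); [reflexivity|]. auto_derive; auto; ring.
Qed.

Lemma is_RInt_gen_reflect (f g : R -> R) a L :
  (forall y, g y = - f (- y)) ->
  is_RInt_gen f (Rbar_locally m_infty) (at_point (- a)) L ->
  is_RInt_gen g (at_point a) (Rbar_locally p_infty) (- L).
Proof.
  intros Hg Hf P [eps HP].
  destruct (Hf (fun v => P (- v))) as [Q R' [M HQ] HR HQR].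
  { exists eps. intros v Hv. apply HP.
    change (Rabs (- v - - L) < eps). rewrite <- Rabs_Ropp.
    replace (- (- v - - L)) with (v - L) by ring. exact Hv. }
  exists (fun u => u = a) (fun b => Q (- b));
    [reflexivity | exists (- M); intros b Hb; apply HQ; lra |].
  intros u b -> Hb. destruct (HQR (- b) (- a) Hb HR) as [I [HI HPI]].
  exists (- I). split; [|exact HPI].
  apply is_RInt_swap, is_RInt_comp_opp in HI.
  eapply is_RInt_ext; [| exact HI]. intros y _. rewrite Hg. reflexivity.
Qed.

(** * A Gronwall bound for Volterra equations *)

Section Volterra.

Variables (w U : R -> R) (C Km : R) (K : R -> R -> R).
Hypothesis w_ge0 : forall y, 0 <= w y.
Hypothesis w_cont : forall y, continuous w y.
Hypothesis U_derive : forall y, is_derive U y (- w y).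
Hypothesis U_bounds : forall y, 0 <= U y <= C.
Hypothesis Km_pos : 0 < Km.
Hypothesis K_bound : forall x y, x <= y -> Rabs (K x y) <= Km.

Definition approx_solution (r : R -> R) (sig : R) : Prop :=
  forall x eta, 0 < eta -> exists b I, x <= b /\
    is_RInt (fun y => K x y * w y * r y) x b I /\ Rabs (r x - I) <= sig + eta.

Lemma is_RInt_weight_exp L x b : 0 < L ->
  is_RInt (fun y => w y * exp (L * U y)) x b ((exp (L * U x) - exp (L * U b)) / L).
Proof.
  intros HL.
  replace ((exp (L * U x) - exp (L * U b)) / L)
    with (minus (- exp (L * U b) / L) (- exp (L * U x) / L))
    by (unfold minus, plus, opp; simpl; field; lra).
  apply (is_RInt_derive (fun y => - exp (L * U y) / L)).
  - intros y _.
    apply (is_derive_ext (fun y => (- / L) * exp (L * U y))); [intros; simpl; field; lra|].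
    evar (v : R). replace (w y * exp (L * U y)) with v.
    + apply (is_derive_scal (fun y => exp (L * U y))).
      apply (is_derive_comp exp (fun y => L * U y)); [apply is_derive_exp|].
      apply (is_derive_scal U). apply U_derive.
    + unfold v, scal; simpl; unfold mult; simpl. field. lra.
  - intros y _. apply (continuous_mult w (fun y => exp (L * U y))); [apply w_cont|].
    apply (continuous_comp (fun y => L * U y) exp).
    + apply (continuous_scal_r L U). apply (ex_derive_continuous U).
      eexists; apply U_derive.
    + apply (ex_derive_continuous exp). auto_derive. auto.
Qed.

(* The weight e^{2 Km U} makes the Volterra operator a contraction with constant 1/2. *)
Lemma volterra_step r sig Rb : 0 <= sig -> 0 <= Rb -> approx_solution r sig ->
  (forall y, Rabs (r y) <= Rb * exp (2 * Km * U y)) ->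
  forall x, Rabs (r x) <= (sig + Rb / 2) * exp (2 * Km * U x).
Proof.
  intros Hsig HRb Hsol Hr x.
  assert (Hexp1 : forall y, 1 <= exp (2 * Km * U y)).
  { intros y. rewrite <- exp_0. apply exp_le_mono. pose proof (U_bounds y). nra. }
  cut (Rabs (r x) <= sig + Rb / 2 * (exp (2 * Km * U x) - 1)).
  { pose proof (Hexp1 x). nra. }
  apply Rle_plus_epsilon. intros eta Heta.
  destruct (Hsol x eta Heta) as [b [I [Hxb [HI Hres]]]].
  assert (HIb : Rabs I <= Km * Rb * ((exp (2 * Km * U x) - exp (2 * Km * U b)) / (2 * Km))).
  { apply (norm_RInt_le (fun y => K x y * w y * r y)
             (fun y => Km * Rb * (w y * exp (2 * Km * U y))) x b); auto.
    - intros y Hy. change norm with Rabs; simpl.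
      rewrite !Rabs_mult, (Rabs_pos_eq (w y)) by auto.
      pose proof (K_bound x y (proj1 Hy)). pose proof (Hr y). pose proof (w_ge0 y).
      pose proof (Rabs_pos (K x y)). pose proof (Rabs_pos (r y)).
      apply Rle_trans with (Km * w y * (Rb * exp (2 * Km * U y))); [|nra].
      apply Rmult_le_compat; try nra.
    - exact (is_RInt_scal _ x b (Km * Rb) _ (is_RInt_weight_exp (2 * Km) x b ltac:(lra))). }
  replace (Km * Rb * ((exp (2 * Km * U x) - exp (2 * Km * U b)) / (2 * Km)))
    with (Rb / 2 * (exp (2 * Km * U x) - exp (2 * Km * U b))) in HIb by (field; lra).
  pose proof (Hexp1 b). pose proof (Rabs_triang_inv (r x) I).
  assert (Rb / 2 * (exp (2 * Km * U x) - exp (2 * Km * U b))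
          <= Rb / 2 * (exp (2 * Km * U x) - 1)) by (apply Rmult_le_compat_l; lra).
  lra.
Qed.

Lemma volterra_bound r sig M : 0 <= sig -> (forall y, Rabs (r y) <= M) ->
  approx_solution r sig -> forall x, Rabs (r x) <= 2 * sig * exp (2 * Km * C).
Proof.
  intros Hsig HM Hsol.
  assert (HM0 : 0 <= M) by (pose proof (HM 0); pose proof (Rabs_pos (r 0)); lra).
  assert (Hexp1 : forall y, 1 <= exp (2 * Km * U y)).
  { intros y. rewrite <- exp_0. apply exp_le_mono. pose proof (U_bounds y). nra. }
  assert (Hiter : forall n y, Rabs (r y) <= (2 * sig + M * (/ 2) ^ n) * exp (2 * Km * U y)).
  { induction n as [|n IH]; intros y.
    - simpl. pose proof (Hexp1 y). pose proof (HM y). nra.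
    - replace (2 * sig + M * (/ 2) ^ S n) with (sig + (2 * sig + M * (/ 2) ^ n) / 2)
        by (simpl; field).
      apply volterra_step; auto.
      assert (0 <= (/ 2) ^ n) by (apply pow_le; lra). nra. }
  intros x.
  assert (Hx : Rabs (r x) <= 2 * sig * exp (2 * Km * U x)).
  { apply Rle_plus_epsilon. intros eps Heps.
    set (E := exp (2 * Km * U x)). assert (HE : 0 < E) by apply exp_pos.
    destruct (pow_lt_1_zero (/ 2)) with (y := eps / ((M + 1) * E)) as [N HN].
    { rewrite Rabs_pos_eq; lra. }
    { apply Rdiv_lt_0_compat; nra. }
    specialize (HN N (Nat.le_refl N)). rewrite Rabs_pos_eq in HN by (apply pow_le; lra).
    assert (M * (/ 2) ^ N * E <= eps).
    { apply Rlt_le in HN. apply (Rmult_le_compat_r ((M + 1) * E)) in HN; [|nra].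
      replace (eps / ((M + 1) * E) * ((M + 1) * E)) with eps in HN by (field; nra).
      assert (0 <= (/ 2) ^ N) by (apply pow_le; lra). nra. }
    specialize (Hiter N x). fold E in Hiter. nra. }
  assert (exp (2 * Km * U x) <= exp (2 * Km * C)).
  { apply exp_le_mono. pose proof (U_bounds x). nra. }
  nra.
Qed.

End Volterra.

(** * The ground state in closed form *)

(* phi = beta e^{-y} omega and p phi^{p-1} = Vpot; Vtail y is the integral of Vpot over
   [y, +oo).  m0 and dm0 are m1(., 0) and its lambda-derivative; K0 and dK0 are the
   kernel of the m1-equation at lambda = 0 and its lambda-derivative. *)
Definition zeta (p y : R) : R := exp (- (p - 1) * y).
Definition omega (p y : R) : R := exp (- (2 / (p - 1)) * ln (1 + zeta p y)).
Definition Vpot (p y : R) : R := 2 * p * (p + 1) * zeta p y / (1 + zeta p y) ^ 2.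
Definition Vmass (p : R) : R := 2 * p * (p + 1) / (p - 1).
Definition Vtail (p y : R) : R := Vmass p * (zeta p y / (1 + zeta p y)).
Definition m0 (p y : R) : R := (1 - zeta p y) / (1 + zeta p y) * omega p y.
Definition dm0 (p y : R) : R := 2 / (p - 1) * zeta p y / (1 + zeta p y) * omega p y.
Definition K0 (x y : R) : R := (exp (x - y) ^ 2 - 1) / 2.
Definition dK0 (x y : R) : R := (1 - exp (x - y)) ^ 2 / 2.

Section GroundState.

Variable p : R.
Hypothesis p_gt1 : 1 < p.

Lemma beta_eq : beta p = exp (ln (2 * (p + 1)) / (p - 1)).
Proof. unfold beta, Rpower. f_equal. field. lra. Qed.

Lemma beta_pos : 0 < beta p.
Proof. rewrite beta_eq. apply exp_pos. Qed.

Lemma phi_eq y : phi p y = beta p * exp (- y) * omega p y.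
Proof.
  rewrite beta_eq. unfold phi, omega, Rpower, sech, zeta.
  set (a := (p - 1) / 2 * y).
  assert (Ha : 0 < exp (- a)) by apply exp_pos.
  assert (Hs : exp (- (p - 1) * y) = exp (- a) * exp (- a)).
  { rewrite <- exp_plus. f_equal. unfold a. field. }
  assert (Hsech : 2 / (exp a + exp (- a)) = 2 * exp (- a) / (1 + exp (- (p - 1) * y))).
  { rewrite Hs. assert (exp a * exp (- a) = 1) by (rewrite <- exp_plus, Rplus_opp_r; apply exp_0).
    assert (0 < exp a) by apply exp_pos. field_simplify_eq; nra. }
  rewrite Hsech.
  assert (0 < exp (- (p - 1) * y)) by apply exp_pos.
  rewrite (ln_div (2 * exp (- a))) by (try apply Rmult_lt_0_compat; lra).
  rewrite ln_mult, ln_exp by lra.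
  rewrite (ln_div (p + 1)), (ln_mult 2 (p + 1)) by lra.
  rewrite <- !exp_plus. f_equal. unfold a. field. lra.
Qed.

Lemma pot_eq y : pot p y = Vpot p y.
Proof.
  unfold pot, Vpot. rewrite phi_eq, beta_eq. unfold Rpower, omega.
  assert (Hz : 0 < zeta p y) by apply exp_pos.
  rewrite !ln_mult by (try apply Rmult_lt_0_compat; apply exp_pos).
  rewrite !ln_exp.
  replace ((p - 1) * (ln (2 * (p + 1)) / (p - 1) + - y + - (2 / (p - 1)) * ln (1 + zeta p y)))
    with (ln (2 * (p + 1)) + ln (zeta p y) - 2 * ln (1 + zeta p y))
    by (unfold zeta; rewrite ln_exp; field; lra).
  unfold Rminus. rewrite !exp_plus, !exp_ln by lra.
  replace (- (2 * ln (1 + zeta p y))) with (- ln (1 + zeta p y) + - ln (1 + zeta p y)) by ring.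
  rewrite exp_plus, <- ln_Rinv, exp_ln by (try apply Rinv_0_lt_compat; lra).
  field. lra.
Qed.

Lemma is_derive_phi_closed y :
  is_derive (phi p) y (phi p y * ((zeta p y - 1) / (1 + zeta p y))).
Proof.
  apply (is_derive_ext (fun y => beta p * exp (- y) * omega p y)); [intros; rewrite phi_eq; auto|].
  rewrite phi_eq. unfold omega, zeta.
  assert (0 < exp (- (p - 1) * y)) by apply exp_pos.
  auto_derive; [lra|]. field. lra.
Qed.

Lemma Derive_phi y :
  Derive (phi p) y = beta p * exp (- y) * omega p y * ((zeta p y - 1) / (1 + zeta p y)).
Proof. rewrite <- phi_eq. apply is_derive_unique, is_derive_phi_closed. Qed.

Lemma phi_even y : phi p (- y) = phi p y.
Proof.
  unfold phi, sech.
  replace ((p - 1) / 2 * - y) with (- ((p - 1) / 2 * y)) by ring.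
  rewrite Ropp_involutive, (Rplus_comm (exp (- ((p - 1) / 2 * y)))). reflexivity.
Qed.

Lemma pot_even y : pot p (- y) = pot p y.
Proof. unfold pot. rewrite phi_even. reflexivity. Qed.

Lemma Derive_phi_odd x : Derive (phi p) (- x) = - Derive (phi p) x.
Proof.
  assert (H : is_derive (fun y => phi p (- y)) x (- Derive (phi p) (- x))).
  { apply is_derive_comp_opp. rewrite Derive_phi, <- phi_eq. apply is_derive_phi_closed. }
  rewrite (Derive_ext (phi p) (fun y => phi p (- y)) x) by (intros; symmetry; apply phi_even).
  replace (Derive (fun y => phi p (- y)) x) with (- Derive (phi p) (- x))
    by (symmetry; apply is_derive_unique, H).
  ring.
Qed.

Lemma Lambda_phi_even x : Lambda_phi p (- x) = Lambda_phi p x.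
Proof. unfold Lambda_phi. rewrite Derive_phi_odd, phi_even. ring. Qed.

Ltac zeta_side_conditions y :=
  pose proof (exp_pos (- (p - 1) * y)); repeat split; try apply Rgt_not_eq; nra.

Lemma omega_bounds y : 0 < omega p y <= 1.
Proof.
  split; [apply exp_pos|]. rewrite <- exp_0. apply exp_le_mono.
  assert (0 < zeta p y) by apply exp_pos.
  assert (0 <= ln (1 + zeta p y)) by (rewrite <- ln_1; apply Rlt_le, ln_increasing; lra).
  assert (0 < 2 / (p - 1)) by (apply Rdiv_lt_0_compat; lra).
  nra.
Qed.

Lemma zeta_ratio_bounds y : 0 <= zeta p y / (1 + zeta p y) <= 1.
Proof.
  assert (0 < zeta p y) by apply exp_pos.
  split; [apply Rdiv_le_0_compat; lra|].
  apply (Rmult_le_reg_r (1 + zeta p y)); [lra|].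
  unfold Rdiv. rewrite Rmult_assoc, Rinv_l; lra.
Qed.

Lemma m0_bound y : Rabs (m0 p y) <= 1.
Proof.
  unfold m0. pose proof (omega_bounds y). assert (0 < zeta p y) by apply exp_pos.
  assert (Rabs ((1 - zeta p y) / (1 + zeta p y)) <= 1).
  { unfold Rdiv. rewrite Rabs_mult, Rabs_inv, (Rabs_pos_eq (1 + zeta p y)) by lra.
    apply (Rmult_le_reg_r (1 + zeta p y)); [lra|].
    rewrite Rmult_assoc, Rinv_l, Rmult_1_r, Rmult_1_l by lra. apply Rabs_le. lra. }
  rewrite Rabs_mult, (Rabs_pos_eq (omega p y)) by lra.
  pose proof (Rabs_pos ((1 - zeta p y) / (1 + zeta p y))). nra.
Qed.

Lemma dm0_bound y : Rabs (dm0 p y) <= 2 / (p - 1).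
Proof.
  pose proof (omega_bounds y). pose proof (zeta_ratio_bounds y).
  assert (0 < 2 / (p - 1)) by (apply Rdiv_lt_0_compat; lra).
  assert (0 < zeta p y) by apply exp_pos.
  replace (dm0 p y) with (2 / (p - 1) * (zeta p y / (1 + zeta p y)) * omega p y)
    by (unfold dm0; field; lra).
  rewrite Rabs_pos_eq by (apply Rmult_le_pos; [apply Rmult_le_pos|]; lra).
  assert (zeta p y / (1 + zeta p y) * omega p y <= 1) by nra.
  rewrite Rmult_assoc. nra.
Qed.

Lemma Vpot_ge0 y : 0 <= Vpot p y.
Proof.
  unfold Vpot. assert (0 < zeta p y) by apply exp_pos.
  apply Rdiv_le_0_compat; nra.
Qed.

Lemma Vtail_bounds y : 0 <= Vtail p y <= Vmass p.
Proof.
  pose proof (zeta_ratio_bounds y).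
  assert (0 < Vmass p) by (unfold Vmass; apply Rdiv_lt_0_compat; nra).
  unfold Vtail. split; nra.
Qed.

Lemma Vtail_derive y : is_derive (Vtail p) y (- Vpot p y).
Proof.
  unfold Vtail, Vmass, Vpot, zeta. auto_derive; [zeta_side_conditions y|].
  field. zeta_side_conditions y.
Qed.

Lemma Vpot_cont y : continuous (Vpot p) y.
Proof.
  apply (ex_derive_continuous (Vpot p)). unfold Vpot, zeta.
  auto_derive. zeta_side_conditions y.
Qed.

Lemma is_RInt_Vpot x b : is_RInt (Vpot p) x b (Vtail p x - Vtail p b).
Proof.
  replace (Vtail p x - Vtail p b) with (minus (opp (Vtail p b)) (opp (Vtail p x)))
    by (unfold minus, plus, opp; simpl; ring).
  apply (is_RInt_derive (fun y => opp (Vtail p y))).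
  - intros y _. rewrite <- (Ropp_involutive (Vpot p y)).
    apply (is_derive_opp (Vtail p)), Vtail_derive.
  - intros y _. apply Vpot_cont.
Qed.

Lemma K0_bound x y : x <= y -> Rabs (K0 x y) <= 1 / 2.
Proof.
  intros Hxy. unfold K0.
  assert (0 < exp (x - y) <= 1)
    by (split; [apply exp_pos | rewrite <- exp_0; apply exp_le_mono; lra]).
  apply Rabs_le. split; nra.
Qed.

Lemma dK0_bound x y : x <= y -> Rabs (dK0 x y) <= 1 / 2.
Proof.
  intros Hxy. unfold dK0.
  assert (0 < exp (x - y) <= 1)
    by (split; [apply exp_pos | rewrite <- exp_0; apply exp_le_mono; lra]).
  apply Rabs_le. split; nra.
Qed.

Lemma is_lim_zeta_expansion (A B D : R -> R) x :
  continuous A 0 -> continuous B 0 -> continuous D 0 ->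
  is_lim (fun y => A (zeta p y) + exp (x - y) * B (zeta p y) + exp (x - y) ^ 2 * D (zeta p y))
    p_infty (A 0).
Proof.
  intros HA HB HD.
  assert (Hz : is_lim (zeta p) p_infty 0).
  { apply (is_lim_ext (fun y => exp (- (p - 1) * y + 0))); [intros; unfold zeta; f_equal; ring|].
    apply is_lim_exp_affine_pinfty. lra. }
  assert (HE : is_lim (fun y => exp (x - y)) p_infty 0).
  { apply (is_lim_ext (fun y => exp (-1 * y + x))); [intros; f_equal; ring|].
    apply is_lim_exp_affine_pinfty. lra. }
  assert (HE2 : is_lim (fun y => exp (x - y) ^ 2) p_infty 0).
  { apply (is_lim_ext (fun y => exp (x - y) * exp (x - y))); [intros; ring|].
    replace 0 with (0 * 0) by ring. apply is_lim_mult_finite; auto. }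
  replace (A 0) with (A 0 + 0 * B 0 + 0 * D 0) by ring.
  apply is_lim_plus'; [apply is_lim_plus'|]; [| apply is_lim_mult_finite..];
    auto; apply (is_lim_comp_continuous (zeta p)); auto.
Qed.

Lemma is_RInt_gen_zeta_expansion (A B D f : R -> R) x :
  continuous A 0 -> continuous B 0 -> continuous D 0 -> (forall y, continuous f y) ->
  (forall y, is_derive (fun y => A (zeta p y) + exp (x - y) * B (zeta p y)
                                 + exp (x - y) ^ 2 * D (zeta p y)) y (f y)) ->
  is_RInt_gen f (at_point x) (Rbar_locally p_infty)
    (A 0 - (A (zeta p x) + B (zeta p x) + D (zeta p x))).
Proof.
  intros HA HB HD Hf Hprim.
  replace (A (zeta p x) + B (zeta p x) + D (zeta p x)) with
    (A (zeta p x) + exp (x - x) * B (zeta p x) + exp (x - x) ^ 2 * D (zeta p x))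
    by (replace (x - x) with 0 by ring; rewrite exp_0; ring).
  apply (is_RInt_gen_primitive_pinfty f (fun y => A (zeta p y) + exp (x - y) * B (zeta p y)
                                                   + exp (x - y) ^ 2 * D (zeta p y)));
    auto using is_lim_zeta_expansion.
Qed.

Ltac continuous_closed_form :=
  match goal with
  | |- continuous ?f ?y =>
      apply (ex_derive_continuous f); unfold K0, dK0, Vpot, m0, dm0, omega, zeta;
      auto_derive; zeta_side_conditions y
  end.

Ltac derive_closed_form x y :=
  unfold K0, dK0, Vpot, m0, dm0, omega, zeta; auto_derive; [zeta_side_conditions y|];
  change (exp (x + - y)) with (exp (x - y)); field; zeta_side_conditions y.

Lemma m0_cont y : continuous (m0 p) y.
Proof. continuous_closed_form. Qed.

Lemma dm0_cont y : continuous (dm0 p) y.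
Proof. continuous_closed_form. Qed.

(* The primitives below were found by symbolic integration in the variable zeta. *)
Lemma m0_volterra x :
  is_RInt_gen (fun y => K0 x y * Vpot p y * m0 p y)
    (at_point x) (Rbar_locally p_infty) (m0 p x - 1).
Proof.
  pose (A := fun z => exp (- (2 / (p - 1)) * ln (1 + z)) / 2
                      * ((z - 1) / (1 + z) - (1 - 2 * (p + 1) * z / (1 + z) ^ 2))).
  pose (D := fun z => exp (- (2 / (p - 1)) * ln (1 + z)) / 2
                      * ((z - 1) / (1 + z) + (1 - 2 * (p + 1) * z / (1 + z) ^ 2))).
  replace (m0 p x - 1) with (A 0 - (A (zeta p x) + (fun _ => 0) (zeta p x) + D (zeta p x))).
  2:{ unfold m0, omega, A, D. rewrite Rplus_0_r, ln_1, Rmult_0_r, exp_0.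
      pose proof (exp_pos (- (p - 1) * x)). unfold zeta. field. lra. }
  apply (is_RInt_gen_zeta_expansion A (fun _ => 0) D); unfold A, D.
  1-3: continuous_closed_form.
  - intros y. continuous_closed_form.
  - intros y. derive_closed_form x y.
Qed.

Lemma dm0_volterra x :
  is_RInt_gen (fun y => dK0 x y * Vpot p y * m0 p y + K0 x y * Vpot p y * dm0 p y)
    (at_point x) (Rbar_locally p_infty) (dm0 p x).
Proof.
  pose (q := 1 / (p - 1)).
  pose (Q1 := fun z => (z - 1) / (1 + z)).
  pose (Q2 := fun z => 1 - 2 * (p + 1) * z / (1 + z) ^ 2).
  pose (A := fun z => exp (- (2 / (p - 1)) * ln (1 + z)) * (- q * p / 2 + (1 + q) / 2 * Q2 z)).
  pose (B := fun z => exp (- (2 / (p - 1)) * ln (1 + z)) * (1 - Q2 z)).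
  pose (D := fun z => exp (- (2 / (p - 1)) * ln (1 + z))
                      * (- q * p / 2 - q * Q1 z + (1 - q) / 2 * Q2 z)).
  replace (dm0 p x) with (A 0 - (A (zeta p x) + B (zeta p x) + D (zeta p x))).
  2:{ unfold dm0, omega, A, B, D, Q1, Q2, q. rewrite Rplus_0_r, ln_1, Rmult_0_r, exp_0.
      pose proof (exp_pos (- (p - 1) * x)). unfold zeta. field. lra. }
  apply (is_RInt_gen_zeta_expansion A B D); unfold A, B, D, Q1, Q2, q.
  1-3: continuous_closed_form.
  - intros y. continuous_closed_form.
  - intros y. derive_closed_form x y.
Qed.

End GroundState.

(** * The kernel near lambda = 0 *)

Lemma root_branch_derive (mu : R -> R) delta r :
  0 < delta -> mu 0 = r -> r ^ 3 - r = 0 -> 3 * r ^ 2 - 1 <> 0 ->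
  (forall l, Rabs l < delta -> mu l ^ 3 - mu l + l = 0) -> continuous mu 0 ->
  is_derive mu 0 (-1 / (3 * r ^ 2 - 1)).
Proof.
  intros Hd H0 Hr Hsimple Hroot Hc.
  pose (g := fun h => mu h ^ 2 + mu h * r + r ^ 2 - 1).
  assert (Hfactor : forall h, Rabs h < delta -> (mu h - r) * g h = - h).
  { intros h Hh. pose proof (Hroot h Hh). unfold g. nra. }
  assert (Hg0 : g 0 = 3 * r ^ 2 - 1) by (unfold g; rewrite H0; ring).
  assert (Hquot : continuous (fun h => -1 / g h) 0).
  { apply (continuous_comp mu (fun z => -1 / (z ^ 2 + z * r + r ^ 2 - 1))); auto.
    apply (ex_derive_continuous (fun z => -1 / (z ^ 2 + z * r + r ^ 2 - 1))).
    auto_derive. rewrite H0. contradict Hsimple. rewrite <- Hsimple. ring. }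
  apply is_derive_Reals. intros eps Heps.
  destruct (proj1 (filterlim_locally _ _) Hquot (mkposreal eps Heps)) as [d1 Hd1].
  exists (mkposreal (Rmin d1 delta) (Rmin_pos _ _ (cond_pos d1) Hd)).
  intros h Hh0 Hh. simpl in Hh. apply Rmin_Rgt_l in Hh as [Hball Hh1].
  specialize (Hd1 h ltac:(change (Rabs (h - 0) < d1); rewrite Rminus_0_r; exact Hball)).
  change (Rabs (-1 / g h - -1 / g 0) < eps) in Hd1.
  pose proof (Hfactor h Hh1) as Hf.
  assert (Hgh : g h <> 0) by (intro Hz; rewrite Hz in Hf; lra).
  rewrite Rplus_0_l, H0, <- Hg0.
  replace ((mu h - r) / h) with (-1 / g h) by (field_simplify_eq; auto; lra).
  exact Hd1.
Qed.

Lemma exp_term_bound bl b0 b' cl c0 l t e1 e3 M :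
  1 / 2 <= cl -> 1 / 2 <= c0 -> t <= 0 ->
  Rabs (bl - b0 - l * b') <= e1 * Rabs l ->
  Rabs (cl - c0) <= M * Rabs l ->
  Rabs (b0 * (cl - c0)) <= e3 * Rabs l ->
  Rabs (bl * exp (cl * t) - b0 * exp (c0 * t) - l * b' * exp (c0 * t))
    <= (e1 + 2 * Rabs b' * M * Rabs l + 2 * e3) * Rabs l.
Proof.
  intros Hcl Hc0 Ht Hb Hc Hbc.
  assert (Hexp : 0 < exp (cl * t) <= 1).
  { split; [apply exp_pos | rewrite <- exp_0; apply exp_le_mono; nra]. }
  pose proof (exp_lipschitz_nonpos cl c0 t Hcl Hc0 Ht) as Hlip.
  pose proof (Rabs_pos l). pose proof (Rabs_pos b'). pose proof (Rabs_pos b0).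
  pose proof (Rabs_pos (bl - b0 - l * b')).
  pose proof (Rabs_pos (exp (cl * t) - exp (c0 * t))).
  replace (bl * exp (cl * t) - b0 * exp (c0 * t) - l * b' * exp (c0 * t))
    with ((bl - b0 - l * b') * exp (cl * t) + l * b' * (exp (cl * t) - exp (c0 * t))
          + b0 * (exp (cl * t) - exp (c0 * t))) by ring.
  eapply Rle_trans; [apply Rabs_triang|].
  eapply Rle_trans; [apply Rplus_le_compat_r, Rabs_triang|].
  rewrite !Rabs_mult, (Rabs_pos_eq (exp (cl * t))) by lra.
  rewrite Rabs_mult in Hbc.
  assert (Rabs (bl - b0 - l * b') * exp (cl * t) <= e1 * Rabs l) by nra.
  assert (Rabs l * Rabs b' * Rabs (exp (cl * t) - exp (c0 * t))
          <= 2 * Rabs b' * M * Rabs l * Rabs l).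
  { apply Rle_trans with (Rabs l * Rabs b' * (2 * (M * Rabs l))); [|lra].
    apply Rmult_le_compat_l; [nra | lra]. }
  assert (Rabs b0 * Rabs (exp (cl * t) - exp (c0 * t)) <= 2 * e3 * Rabs l) by nra.
  nra.
Qed.

Lemma mult_div_succ_le a e : 0 <= a -> 0 <= e -> a * (e / (a + 1)) <= e.
Proof.
  intros Ha He. apply (Rmult_le_reg_r (a + 1)); [lra|].
  unfold Rdiv. rewrite Rmult_assoc, (Rmult_assoc e), Rinv_l by lra. nra.
Qed.

(* [b 0 * c' = 0] removes the first-order term b(0) c'(0) t e^{c(0) t}; it holds for
   both exponential terms of the kernel. *)
Lemma exp_term_small_o (b c : R -> R) b' c' :
  is_derive b 0 b' -> is_derive c 0 c' -> 1 / 2 < c 0 -> b 0 * c' = 0 ->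
  forall eps, 0 < eps -> exists d, 0 < d /\ forall l, Rabs l < d -> forall t, t <= 0 ->
    Rabs (b l * exp (c l * t) - b 0 * exp (c 0 * t) - l * b' * exp (c 0 * t)) <= eps * Rabs l.
Proof.
  intros Hb Hc Hc0 Hbc eps Heps.
  set (M := 1 + Rabs c').
  pose proof (Rabs_pos c'). pose proof (Rabs_pos b'). pose proof (Rabs_pos (b 0)).
  set (ec := Rmin 1 (eps / 6 / (Rabs (b 0) + 1))).
  assert (Hec : 0 < ec) by (apply Rmin_pos; [lra | apply Rdiv_lt_0_compat; lra]).
  destruct (proj1 (is_derive_iff_small_o _ _ _) Hb (eps / 3) ltac:(lra)) as [db [Hdb Hbo]].
  destruct (proj1 (is_derive_iff_small_o _ _ _) Hc ec Hec) as [dc [Hdc Hco]].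
  exists (Rmin (Rmin db dc) (Rmin ((c 0 - 1 / 2) / M) (eps / 6 / (Rabs b' * M + 1)))).
  split; [repeat apply Rmin_pos; auto; apply Rdiv_lt_0_compat; unfold M; nra|].
  intros l Hl t Ht.
  apply Rmin_Rgt_l in Hl as [[Hlb Hlc]%Rmin_Rgt_l [Hl1 Hl2]%Rmin_Rgt_l].
  specialize (Hbo l Hlb). specialize (Hco l Hlc). rewrite Rplus_0_l in Hbo, Hco.
  pose proof (Rabs_pos l).
  assert (Hec1 : ec <= 1) by apply Rmin_l.
  assert (Hcl : Rabs (c l - c 0) <= M * Rabs l).
  { replace (c l - c 0) with ((c l - c 0 - l * c') + l * c') by ring.
    eapply Rle_trans; [apply Rabs_triang|]. rewrite Rabs_mult. unfold M. nra. }
  assert (Hbcl : Rabs (b 0 * (c l - c 0)) <= eps / 6 * Rabs l).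
  { replace (b 0 * (c l - c 0)) with (b 0 * (c l - c 0 - l * c'))
      by (transitivity (b 0 * (c l - c 0) - l * (b 0 * c')); [| rewrite Hbc]; ring).
    rewrite Rabs_mult.
    assert (Rabs (b 0) * ec <= eps / 6).
    { apply Rle_trans with (Rabs (b 0) * (eps / 6 / (Rabs (b 0) + 1)));
        [apply Rmult_le_compat_l, Rmin_r; lra | apply mult_div_succ_le; lra]. }
    pose proof (Rabs_pos (c l - c 0 - l * c')). nra. }
  assert (HM : M * Rabs l <= c 0 - 1 / 2).
  { apply Rlt_le in Hl1. apply (Rmult_le_compat_l M) in Hl1; [|unfold M; lra].
    replace (M * ((c 0 - 1 / 2) / M)) with (c 0 - 1 / 2) in Hl1 by (field; unfold M; lra). lra. }
  assert (Hsmall : 2 * Rabs b' * M * Rabs l <= eps / 3).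
  { apply Rlt_le in Hl2. apply (Rmult_le_compat_l (Rabs b' * M)) in Hl2; [|unfold M; nra].
    pose proof (mult_div_succ_le (Rabs b' * M) (eps / 6) ltac:(unfold M; nra) ltac:(lra)). nra. }
  eapply Rle_trans.
  - apply (exp_term_bound _ _ _ _ _ _ _ (eps / 3) (eps / 6) M); auto; try lra.
    apply Rabs_le_between in Hcl. lra.
  - apply Rmult_le_compat_r; lra.
Qed.

Section JostKernel.

Variables (delta : R) (mu1 mu2 mu3 : R -> R).
Hypothesis delta_pos : 0 < delta.
Hypothesis branches : root_branches delta mu1 mu2 mu3.

Definition K1 (l x y : R) : R := kernel (mu1 l) (mu2 l) (mu3 l) (mu1 l) x y.

Lemma K1_cont l x y : continuous (fun y => K1 l x y) y.
Proof.
  apply (ex_derive_continuous (fun y => K1 l x y)). unfold K1, kernel. auto_derive. auto.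
Qed.

Lemma root_branches_derive :
  is_derive mu1 0 (-1 / 2) /\ is_derive mu2 0 1 /\ is_derive mu3 0 (-1 / 2).
Proof.
  destruct branches as [H1 [H2 [H3 Hb]]].
  assert (H0 : Rabs 0 < delta) by (rewrite Rabs_R0; auto).
  destruct (Hb 0 H0) as [_ [_ [_ [C1 [C2 C3]]]]].
  split; [|split].
  - replace (-1 / 2) with (-1 / (3 * (-1) ^ 2 - 1)) by field.
    apply (root_branch_derive mu1 delta); auto; [ring | lra | apply Hb].
  - replace 1 with (-1 / (3 * 0 ^ 2 - 1)) by field.
    apply (root_branch_derive mu2 delta); auto; [ring | lra | apply Hb].
  - replace (-1 / 2) with (-1 / (3 * 1 ^ 2 - 1)) by field.
    apply (root_branch_derive mu3 delta); auto; [ring | lra | apply Hb].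
Qed.

Definition kcoef1 (l : R) : R := a1 (mu1 l) (mu2 l) (mu3 l) * mu1 l.
Definition kcoef2 (l : R) : R := a2 (mu1 l) (mu2 l) (mu3 l) * mu2 l.
Definition kcoef3 (l : R) : R := a3 (mu1 l) (mu2 l) (mu3 l) * mu3 l.

Lemma K1_eq l x y :
  K1 l x y = kcoef1 l + kcoef2 l * exp ((mu2 l - mu1 l) * (x - y))
             + kcoef3 l * exp ((mu3 l - mu1 l) * (x - y)).
Proof.
  unfold K1, kernel, kcoef1, kcoef2, kcoef3.
  replace ((mu1 l - mu1 l) * (x - y)) with 0 by ring. rewrite exp_0. ring.
Qed.

Lemma kernel_coeffs_at0 : kcoef1 0 = -1 / 2 /\ kcoef2 0 = 0 /\ kcoef3 0 = 1 / 2.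
Proof.
  destruct branches as [H1 [H2 [H3 _]]].
  unfold kcoef1, kcoef2, kcoef3, a1, a2, a3. rewrite H1, H2, H3.
  split; [|split]; field.
Qed.

Lemma kernel_coeffs_derive :
  is_derive kcoef1 0 (1 / 2) /\ is_derive kcoef2 0 (-1) /\ is_derive kcoef3 0 (1 / 2).
Proof.
  destruct branches as [H1 [H2 [H3 _]]].
  destruct root_branches_derive as [D1 [D2 D3]].
  assert (E1 : Derive (fun l => mu1 l) 0 = -1 / 2) by (apply is_derive_unique; auto).
  assert (E2 : Derive (fun l => mu2 l) 0 = 1) by (apply is_derive_unique; auto).
  assert (E3 : Derive (fun l => mu3 l) 0 = -1 / 2) by (apply is_derive_unique; auto).
  unfold kcoef1, kcoef2, kcoef3, a1, a2, a3.
  split; [|split]; auto_derive;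
    try (repeat split; try (eexists; eassumption); rewrite H1, H2, H3; lra);
    rewrite E1, E2, E3, H1, H2, H3; field.
Qed.

Lemma K1_expansion eps : 0 < eps -> exists d, 0 < d /\
  forall l, Rabs l < d -> forall x y, x <= y ->
    Rabs (K1 l x y - K0 x y - l * dK0 x y) <= eps * Rabs l.
Proof.
  intros Heps.
  destruct branches as [H1 [H2 [H3 _]]].
  destruct root_branches_derive as [D1 [D2 D3]].
  destruct kernel_coeffs_derive as [B1 [B2 B3]].
  destruct kernel_coeffs_at0 as [Hb1 [Hb2 Hb3]].
  assert (C2 : is_derive (fun l => mu2 l - mu1 l) 0 (1 - -1 / 2))
    by (apply @is_derive_minus; auto).
  assert (C3 : is_derive (fun l => mu3 l - mu1 l) 0 (-1 / 2 - -1 / 2))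
    by (apply @is_derive_minus; auto).
  destruct (proj1 (is_derive_iff_small_o _ _ _) B1 (eps / 3) ltac:(lra)) as [d1 [Hd1 E1]].
  destruct (exp_term_small_o kcoef2 _ _ _ B2 C2 ltac:(cbv beta; rewrite H1, H2; lra)
              ltac:(rewrite Hb2; ring) (eps / 3) ltac:(lra)) as [d2 [Hd2 E2]].
  destruct (exp_term_small_o kcoef3 _ _ _ B3 C3 ltac:(cbv beta; rewrite H1, H3; lra)
              ltac:(ring) (eps / 3) ltac:(lra)) as [d3 [Hd3 E3]].
  exists (Rmin d1 (Rmin d2 d3)). split; [repeat apply Rmin_pos; auto|].
  intros l Hl x y Hxy. apply Rmin_Rgt_l in Hl as [Hl1 [Hl2 Hl3]%Rmin_Rgt_l].
  specialize (E1 l Hl1).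
  specialize (E2 l Hl2 (x - y) ltac:(lra)). specialize (E3 l Hl3 (x - y) ltac:(lra)).
  cbv beta in E2, E3. rewrite Rplus_0_l, Hb1 in E1.
  rewrite H1, H2, Hb2 in E2. rewrite H1, H3, Hb3 in E3.
  replace (K1 l x y - K0 x y - l * dK0 x y) with
    ((kcoef1 l - -1 / 2 - l * (1 / 2))
     + (kcoef2 l * exp ((mu2 l - mu1 l) * (x - y)) - 0 * exp ((0 - -1) * (x - y))
        - l * -1 * exp ((0 - -1) * (x - y)))
     + (kcoef3 l * exp ((mu3 l - mu1 l) * (x - y)) - 1 / 2 * exp ((1 - -1) * (x - y))
        - l * (1 / 2) * exp ((1 - -1) * (x - y)))).
  2:{ rewrite K1_eq. unfold K0, dK0.
      replace ((1 - -1) * (x - y)) with ((x - y) + (x - y)) by ring.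
      replace ((0 - -1) * (x - y)) with (x - y) by ring.
      rewrite exp_plus. field. }
  eapply Rle_trans; [apply Rabs_triang|].
  eapply Rle_trans; [apply Rplus_le_compat_r, Rabs_triang|]. lra.
Qed.

End JostKernel.

(** * Expansion of the Jost solution *)

Lemma source_bound k k0 kd l eps v u du D :
  Rabs (k - k0 - l * kd) <= eps * Rabs l -> Rabs kd <= 1 / 2 -> 0 <= v ->
  Rabs u <= 1 -> Rabs du <= D ->
  Rabs ((k - k0 - l * kd) * v * u + l * (k - k0) * v * du)
    <= Rabs l * (eps + (1 / 2 + eps) * Rabs l * D) * v.
Proof.
  intros Hk Hkd Hv Hu Hdu.
  pose proof (Rabs_pos l). pose proof (Rabs_pos u). pose proof (Rabs_pos du).
  pose proof (Rabs_pos (k - k0 - l * kd)).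
  assert (Hk0 : Rabs (k - k0) <= (1 / 2 + eps) * Rabs l).
  { replace (k - k0) with ((k - k0 - l * kd) + l * kd) by ring.
    eapply Rle_trans; [apply Rabs_triang|]. rewrite Rabs_mult. nra. }
  eapply Rle_trans; [apply Rabs_triang|]. rewrite !Rabs_mult, (Rabs_pos_eq v) by auto.
  assert (Rabs (k - k0 - l * kd) * v * Rabs u <= eps * Rabs l * v).
  { apply Rle_trans with (Rabs (k - k0 - l * kd) * v * 1); [apply Rmult_le_compat_l; nra | nra]. }
  assert (Rabs l * Rabs (k - k0) * v * Rabs du <= Rabs l * ((1 / 2 + eps) * Rabs l) * v * D).
  { pose proof (Rabs_pos (k - k0)). apply Rmult_le_compat; auto.
    - apply Rmult_le_pos; [apply Rmult_le_pos|]; auto.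
    - apply Rmult_le_compat_r; [auto | apply Rmult_le_compat_l; auto]. }
  nra.
Qed.

Section JostExpansion.

Variables (p delta : R) (mu1 mu2 mu3 : R -> R) (m : R -> R -> R).
Hypothesis p_gt1 : 1 < p.
Hypothesis delta_pos : 0 < delta.
Hypothesis branches : root_branches delta mu1 mu2 mu3.
Hypothesis jost : forall l, Rabs l < delta -> is_m1 p mu1 mu2 mu3 l (fun x => m x l).

Definition jost_remainder (l y : R) : R := m y l - m0 p y - l * dm0 p y.

Definition source_size (eps l : R) : R :=
  Rabs l * (eps + (1 / 2 + eps) * Rabs l * (2 / (p - 1))) * Vmass p.

Lemma source_size_ge0 eps l : 0 <= eps -> 0 <= source_size eps l.
Proof.
  intros Heps. unfold source_size, Vmass. pose proof (Rabs_pos l).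
  assert (0 < 2 / (p - 1)) by (apply Rdiv_lt_0_compat; lra).
  assert (0 < 2 * p * (p + 1) / (p - 1)) by (apply Rdiv_lt_0_compat; nra).
  repeat apply Rmult_le_pos; try apply Rplus_le_le_0_compat; try lra;
    repeat apply Rmult_le_pos; lra.
Qed.

Lemma source_integral_bound eps l x b S :
  0 <= eps -> x <= b ->
  (forall y, x <= y -> Rabs (K1 mu1 mu2 mu3 l x y - K0 x y - l * dK0 x y) <= eps * Rabs l) ->
  is_RInt (fun y => (K1 mu1 mu2 mu3 l x y - K0 x y - l * dK0 x y) * Vpot p y * m0 p y
                    + l * (K1 mu1 mu2 mu3 l x y - K0 x y) * Vpot p y * dm0 p y) x b S ->
  Rabs S <= source_size eps l.
Proof.
  intros Heps Hxb Hexp HS.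
  set (bnd := Rabs l * (eps + (1 / 2 + eps) * Rabs l * (2 / (p - 1)))).
  assert (Hbnd : 0 <= bnd).
  { unfold bnd. pose proof (Rabs_pos l). assert (0 < 2 / (p - 1)) by (apply Rdiv_lt_0_compat; lra).
    apply Rmult_le_pos; [lra|]. apply Rplus_le_le_0_compat; [lra|].
    repeat apply Rmult_le_pos; lra. }
  apply Rle_trans with (bnd * (Vtail p x - Vtail p b)).
  - change (norm S <= bnd * (Vtail p x - Vtail p b)).
    eapply (norm_RInt_le _ (fun y => bnd * Vpot p y)); [exact Hxb | | exact HS |].
    + intros y Hy. change norm with Rabs; simpl.
      apply source_bound; auto using Vpot_ge0, m0_bound, dm0_bound.
      * apply Hexp. lra.
      * apply dK0_bound. lra.
    + exact (is_RInt_scal _ x b bnd _ (is_RInt_Vpot p p_gt1 x b)).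
  - unfold source_size. fold bnd. apply Rmult_le_compat_l; auto.
    pose proof (Vtail_bounds p p_gt1 x). pose proof (Vtail_bounds p p_gt1 b). lra.
Qed.

Lemma remainder_integral_bound eps l x b Im I0 Id :
  0 <= eps -> Rabs l <= 1 -> x <= b ->
  (forall y, x <= y -> Rabs (K1 mu1 mu2 mu3 l x y - K0 x y - l * dK0 x y) <= eps * Rabs l) ->
  is_RInt (fun y => K1 mu1 mu2 mu3 l x y * Vpot p y * m y l) x b Im ->
  is_RInt (fun y => K0 x y * Vpot p y * m0 p y) x b I0 ->
  is_RInt (fun y => dK0 x y * Vpot p y * m0 p y + K0 x y * Vpot p y * dm0 p y) x b Id ->
  exists I, is_RInt (fun y => K1 mu1 mu2 mu3 l x y * Vpot p y * jost_remainder l y) x b I /\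
    Rabs (jost_remainder l x - I) <= source_size eps l
      + (Rabs (Im - (m x l - 1)) + Rabs (I0 - (m0 p x - 1)) + Rabs (Id - dm0 p x)).
Proof.
  intros Heps Hl1 Hxb Hexp HIm HI0 HId.
  set (k := fun y => K1 mu1 mu2 mu3 l x y * Vpot p y).
  assert (Hex : forall f, (forall y, continuous f y) -> ex_RInt (fun y => k y * f y) x b).
  { intros f Hf. apply (ex_RInt_continuous (fun y => k y * f y)). intros y _.
    apply (continuous_mult k f); auto.
    apply (continuous_mult (fun y => K1 mu1 mu2 mu3 l x y) (Vpot p));
      [apply K1_cont | apply Vpot_cont]. }
  destruct (Hex (m0 p) (m0_cont p)) as [J1 HJ1].
  destruct (Hex (dm0 p) (dm0_cont p)) as [J2 HJ2].
  exists (Im - J1 - l * J2). split.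
  - apply (is_RInt_ext (fun y => K1 mu1 mu2 mu3 l x y * Vpot p y * m y l - k y * m0 p y
                                 - l * (k y * dm0 p y))).
    { intros y _. unfold k, jost_remainder.
      match goal with |- ?u = ?v => change (@eq R u v) end. ring. }
    exact (is_RInt_minus _ _ _ _ _ _ (is_RInt_minus _ _ _ _ _ _ HIm HJ1)
             (is_RInt_scal _ _ _ l _ HJ2)).
  - set (S := J1 - I0 - l * Id + l * J2).
    assert (HS : Rabs S <= source_size eps l).
    { apply (source_integral_bound eps l x b); auto.
      apply (is_RInt_ext (fun y => k y * m0 p y - K0 x y * Vpot p y * m0 p y
                 - l * (dK0 x y * Vpot p y * m0 p y + K0 x y * Vpot p y * dm0 p y)
                 + l * (k y * dm0 p y))).
      { intros y _. unfold k. match goal with |- ?u = ?v => change (@eq R u v) end. ring. }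
      exact (is_RInt_plus _ _ _ _ _ _
               (is_RInt_minus _ _ _ _ _ _ (is_RInt_minus _ _ _ _ _ _ HJ1 HI0)
                  (is_RInt_scal _ _ _ l _ HId))
               (is_RInt_scal _ _ _ l _ HJ2)). }
    replace (jost_remainder l x - (Im - J1 - l * J2))
      with (- (Im - (m x l - 1)) + (I0 - (m0 p x - 1)) + l * (Id - dm0 p x) + S)
      by (unfold S, jost_remainder; ring).
    assert (Rabs (l * (Id - dm0 p x)) <= Rabs (Id - dm0 p x)).
    { rewrite Rabs_mult. pose proof (Rabs_pos (Id - dm0 p x)). nra. }
    pose proof (Rabs_triang (- (Im - (m x l - 1)) + (I0 - (m0 p x - 1)) + l * (Id - dm0 p x)) S).
    pose proof (Rabs_triang (- (Im - (m x l - 1)) + (I0 - (m0 p x - 1))) (l * (Id - dm0 p x))).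
    pose proof (Rabs_triang (- (Im - (m x l - 1))) (I0 - (m0 p x - 1))).
    rewrite Rabs_Ropp in *. lra.
Qed.

Lemma jost_approx_solution eps l :
  0 <= eps -> Rabs l <= 1 -> Rabs l < delta ->
  (forall x y, x <= y -> Rabs (K1 mu1 mu2 mu3 l x y - K0 x y - l * dK0 x y) <= eps * Rabs l) ->
  approx_solution (Vpot p) (K1 mu1 mu2 mu3 l) (jost_remainder l) (source_size eps l).
Proof.
  intros Heps Hl1 Hl Hexp x eta Heta.
  destruct (jost l Hl) as [_ Hm].
  destruct (is_RInt_gen_pinfty_truncate _ _ _ (Hm x) (eta / 3) ltac:(lra)) as [Mm HMm].
  destruct (is_RInt_gen_pinfty_truncate _ _ _ (m0_volterra p p_gt1 x) (eta / 3) ltac:(lra))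
    as [M0 HM0].
  destruct (is_RInt_gen_pinfty_truncate _ _ _ (dm0_volterra p p_gt1 x) (eta / 3) ltac:(lra))
    as [Md HMd].
  set (b := Rmax x (Rmax Mm (Rmax M0 Md)) + 1).
  assert (Hb : Rmax x (Rmax Mm (Rmax M0 Md)) < b) by (unfold b; lra).
  apply Rmax_Rlt in Hb as [Hxb [Hbm [Hb0 Hbd]%Rmax_Rlt]%Rmax_Rlt].
  destruct (HMm b Hbm) as [Im [HIm HIm_err]].
  destruct (HM0 b Hb0) as [I0 [HI0 HI0_err]].
  destruct (HMd b Hbd) as [Id [HId HId_err]].
  destruct (remainder_integral_bound eps l x b Im I0 Id) as [I [HI HIb]]; auto; try lra.
  { eapply is_RInt_ext; [| exact HIm].
    intros y _. unfold K1. rewrite (pot_eq p p_gt1). reflexivity. }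
  exists b, I. split; [lra | split; [exact HI | lra]].
Qed.

Lemma jost_remainder_bound eps l :
  0 <= eps <= 1 -> Rabs l <= 1 -> Rabs l < delta ->
  (forall x y, x <= y -> Rabs (K1 mu1 mu2 mu3 l x y - K0 x y - l * dK0 x y) <= eps * Rabs l) ->
  forall x, Rabs (jost_remainder l x) <= 2 * source_size eps l * exp (2 * 2 * Vmass p).
Proof.
  intros Heps Hl1 Hl Hexp.
  destruct (jost l Hl) as [[Mb HMb] _].
  pose proof (Rabs_pos l).
  apply (volterra_bound (Vpot p) (Vtail p) (Vmass p) 2 (K1 mu1 mu2 mu3 l)
           (Vpot_ge0 p p_gt1) (Vpot_cont p) (Vtail_derive p p_gt1) (Vtail_bounds p p_gt1)
           ltac:(lra)) with (M := Mb + 1 + 2 / (p - 1)).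
  - intros x y Hxy. specialize (Hexp x y Hxy).
    pose proof (K0_bound x y Hxy). pose proof (dK0_bound x y Hxy).
    replace (K1 mu1 mu2 mu3 l x y)
      with ((K1 mu1 mu2 mu3 l x y - K0 x y - l * dK0 x y) + K0 x y + l * dK0 x y) by ring.
    pose proof (Rabs_triang ((K1 mu1 mu2 mu3 l x y - K0 x y - l * dK0 x y) + K0 x y) (l * dK0 x y)).
    pose proof (Rabs_triang (K1 mu1 mu2 mu3 l x y - K0 x y - l * dK0 x y) (K0 x y)).
    rewrite Rabs_mult in *. pose proof (Rabs_pos (dK0 x y)). nra.
  - apply source_size_ge0. lra.
  - intros y. unfold jost_remainder.
    pose proof (HMb y). pose proof (m0_bound p p_gt1 y). pose proof (dm0_bound p p_gt1 y).
    assert (Rabs (l * dm0 p y) <= 2 / (p - 1)).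
    { rewrite Rabs_mult. pose proof (Rabs_pos (dm0 p y)). nra. }
    repeat match goal with H : Rabs _ <= _ |- _ => apply Rabs_le_between in H end.
    apply Rabs_le. lra.
  - apply jost_approx_solution; auto. lra.
Qed.

Lemma jost_remainder_small_o e0 : 0 < e0 -> exists d, 0 < d /\
  forall l, Rabs l < d -> forall x, Rabs (jost_remainder l x) <= e0 * Rabs l.
Proof.
  intros He0.
  set (A := 2 * Vmass p * exp (2 * 2 * Vmass p)).
  set (D := 2 / (p - 1)).
  assert (HA : 0 < A).
  { unfold A, Vmass. pose proof (exp_pos (2 * 2 * (2 * p * (p + 1) / (p - 1)))).
    assert (0 < 2 * p * (p + 1) / (p - 1)) by (apply Rdiv_lt_0_compat; nra). nra. }
  assert (HD : 0 < D) by (unfold D; apply Rdiv_lt_0_compat; lra).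
  set (eps := Rmin 1 (e0 / (2 * A))).
  assert (Heps : 0 < eps) by (apply Rmin_pos; [lra | apply Rdiv_lt_0_compat; lra]).
  assert (Heps1 : eps <= 1) by apply Rmin_l.
  assert (HepsA : A * eps <= e0 / 2).
  { assert (eps <= e0 / (2 * A)) by apply Rmin_r.
    apply (Rmult_le_compat_l A) in H; [|lra].
    replace (A * (e0 / (2 * A))) with (e0 / 2) in H by (field; lra). exact H. }
  destruct (K1_expansion delta mu1 mu2 mu3 delta_pos branches eps Heps) as [dK [HdK HK]].
  exists (Rmin dK (Rmin delta (Rmin 1 (e0 / (3 * A * D))))).
  split; [repeat apply Rmin_pos; auto; [lra | apply Rdiv_lt_0_compat; nra]|].
  intros l Hl x.
  apply Rmin_Rgt_l in Hl as [HldK [Hld [Hl1 Hl2]%Rmin_Rgt_l]%Rmin_Rgt_l].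
  assert (Hsmall : A * D * Rabs l <= e0 / 3).
  { apply Rlt_le, (Rmult_le_compat_l (A * D)) in Hl2; [|nra].
    replace (A * D * (e0 / (3 * A * D))) with (e0 / 3) in Hl2 by (field; lra). exact Hl2. }
  eapply Rle_trans; [apply (jost_remainder_bound eps l); auto; lra|].
  replace (2 * source_size eps l * exp (2 * 2 * Vmass p))
    with (Rabs l * (A * eps + (1 / 2 + eps) * (A * D * Rabs l)))
    by (unfold source_size, A, D; ring).
  pose proof (Rabs_pos l).
  assert ((1 / 2 + eps) * (A * D * Rabs l) <= e0 / 2).
  { apply Rle_trans with (3 / 2 * (e0 / 3)); [|lra].
    apply Rmult_le_compat; try lra. apply Rmult_le_pos; nra. }
  rewrite (Rmult_comm e0). apply Rmult_le_compat_l; lra.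
Qed.

Lemma jost_at_zero x : m x 0 = m0 p x /\ is_derive (fun l => m x l) 0 (dm0 p x).
Proof.
  assert (H0 : m x 0 = m0 p x).
  { destruct (jost_remainder_small_o 1 ltac:(lra)) as [d [Hd Hr]].
    specialize (Hr 0 ltac:(rewrite Rabs_R0; auto) x).
    unfold jost_remainder in Hr. rewrite Rabs_R0, Rmult_0_r in Hr.
    pose proof (Rabs_pos (m x 0 - m0 p x - 0 * dm0 p x)).
    assert (Hz : m x 0 - m0 p x - 0 * dm0 p x = 0) by (apply Rabs_eq_0; lra). lra. }
  split; auto.
  apply is_derive_iff_small_o. intros e0 He0.
  destruct (jost_remainder_small_o e0 He0) as [d [Hd Hr]].
  exists d. split; auto. intros h Hh. rewrite Rplus_0_l, H0. apply (Hr h Hh x).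
Qed.

End JostExpansion.

Lemma jost_f1_at_zero p delta mu1 mu2 mu3 (m : R -> R -> R) :
  1 < p -> 0 < delta -> root_branches delta mu1 mu2 mu3 ->
  (forall l, Rabs l < delta -> is_m1 p mu1 mu2 mu3 l (fun x => m x l)) ->
  forall x,
    exp (mu1 0 * x) * m x 0 = - / beta p * Derive (phi p) x /\
    is_derive (fun l => exp (mu1 l * x) * m x l) 0
      (/ beta p * (1 / (p - 1) * Derive (phi p) x + Lambda_phi p x)).
Proof.
  intros Hp Hd Hrb Hm x.
  destruct (jost_at_zero p delta mu1 mu2 mu3 m Hp Hd Hrb Hm x) as [Hm0 Hdm0].
  destruct (root_branches_derive delta mu1 mu2 mu3 Hd Hrb) as [Hmu1 _].
  destruct Hrb as [H1 _].
  pose proof (beta_pos p Hp). pose proof (exp_pos (- (p - 1) * x)).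
  unfold Lambda_phi. rewrite (Derive_phi p Hp), (phi_eq p Hp).
  split.
  { rewrite H1, Hm0. unfold m0. replace (-1 * x) with (- x) by ring. unfold zeta. field. lra. }
  assert (He : is_derive (fun l => exp (mu1 l * x)) 0 (-1 / 2 * x * exp (mu1 0 * x))).
  { apply (is_derive_comp exp (fun l => mu1 l * x) 0 (exp (mu1 0 * x)) (-1 / 2 * x)).
    - apply is_derive_exp.
    - apply (is_derive_scal_l mu1 0 (-1 / 2) x). auto. }
  pose proof (is_derive_mult _ _ _ _ _ He Hdm0 ltac:(intros; apply Rmult_comm)) as Hprod.
  unfold mult, plus in Hprod; simpl in Hprod.
  replace (/ beta p * _) with (-1 / 2 * x * exp (mu1 0 * x) * m x 0 + exp (mu1 0 * x) * dm0 p x);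
    [exact Hprod|].
  rewrite H1, Hm0. unfold m0, dm0, zeta. replace (-1 * x) with (- x) by ring. field. lra.
Qed.

(** * Reflection *)

Lemma kernel_reflect a b c x y :
  kernel (- c) (- b) (- a) (- c) x y = - kernel a b c c (- x) (- y).
Proof.
  unfold kernel, a1, a2, a3.
  replace ((- c - - c) * (x - y)) with ((c - c) * (- x - - y)) by ring.
  replace ((- b - - c) * (x - y)) with ((b - c) * (- x - - y)) by ring.
  replace ((- a - - c) * (x - y)) with ((a - c) * (- x - - y)) by ring.
  replace ((- c - - b) * (- c - - a)) with ((a - c) * (b - c)) by ring.
  replace ((- b - - c) * (- b - - a)) with ((b - a) * (b - c)) by ring.
  replace ((- c - - a) * (- b - - a)) with ((a - b) * (a - c)) by ring.
  ring.
Qed.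

Lemma root_branches_reflect delta mu1 mu2 mu3 :
  root_branches delta mu1 mu2 mu3 ->
  root_branches delta (fun l => - mu3 (- l)) (fun l => - mu2 (- l)) (fun l => - mu1 (- l)).
Proof.
  intros [H1 [H2 [H3 H]]]. unfold root_branches. rewrite Ropp_0, H1, H2, H3.
  split; [ring | split; [ring | split; [ring|]]].
  intros l Hl. rewrite <- Rabs_Ropp in Hl.
  destruct (H (- l) Hl) as [r1 [r2 [r3 [c1 [c2 c3]]]]].
  assert (Hopp : forall mu : R -> R, continuous mu (- l) -> continuous (fun l => - mu (- l)) l).
  { intros mu Hc. apply (continuous_opp (fun l => mu (- l))), (continuous_comp Ropp mu); auto.
    apply (ex_derive_continuous Ropp). auto_derive. auto. }
  repeat split; auto; nra.
Qed.

Lemma is_m3_reflect p mu1 mu2 mu3 (m3 : R -> R -> R) l :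
  is_m3 p mu1 mu2 mu3 (- l) (fun x => m3 x (- l)) ->
  is_m1 p (fun l => - mu3 (- l)) (fun l => - mu2 (- l)) (fun l => - mu1 (- l)) l
    (fun x => m3 (- x) (- l)).
Proof.
  intros [[M HM] Hint]. split; [exists M; intros x; apply HM|].
  intros x. replace (m3 (- x) (- l) - 1) with (- (1 - m3 (- x) (- l))) by ring.
  eapply is_RInt_gen_reflect; [| exact (Hint (- x))].
  intros y. cbv beta. rewrite kernel_reflect, pot_even. ring.
Qed.

Theorem mainTheorem12 (p delta : R) (mu1 mu2 mu3 : R -> R) (m1 m3 : R -> R -> R) :
  1 < p < 5 -> 0 < delta ->
  root_branches delta mu1 mu2 mu3 ->
  (forall l, Rabs l < delta -> is_m1 p mu1 mu2 mu3 l (fun x => m1 x l)) ->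
  (forall l, Rabs l < delta -> is_m3 p mu1 mu2 mu3 l (fun x => m3 x l)) ->
  let f1 := fun x l => exp (mu1 l * x) * m1 x l in
  let f3 := fun x l => exp (mu3 l * x) * m3 x l in
  forall x : R,
    f1 x 0 = - / beta p * Derive (phi p) x /\
    f3 (- x) 0 = - / beta p * Derive (phi p) x /\
    is_derive (fun l => f1 x l) 0
      (/ beta p * (1 / (p - 1) * Derive (phi p) x + Lambda_phi p x)) /\
    is_derive (fun l => f3 x l) 0
      (/ beta p * (1 / (p - 1) * Derive (phi p) x - Lambda_phi p x)).
Proof.
  (* The computation holds for every p > 1. *)
  intros [Hp _] Hd Hrb Hm1 Hm3 f1 f3 x.
  assert (Hrb' := root_branches_reflect _ _ _ _ Hrb).
  assert (Hm3' : forall l, Rabs l < delta ->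
            is_m1 p (fun l => - mu3 (- l)) (fun l => - mu2 (- l)) (fun l => - mu1 (- l)) l
              (fun x => m3 (- x) (- l))).
  { intros l Hl. apply is_m3_reflect, Hm3. rewrite Rabs_Ropp. exact Hl. }
  destruct (jost_f1_at_zero _ _ _ _ _ _ Hp Hd Hrb Hm1 x) as [F1 D1].
  destruct (jost_f1_at_zero _ _ _ _ _ _ Hp Hd Hrb' Hm3' x) as [F3 _].
  destruct (jost_f1_at_zero _ _ _ _ _ _ Hp Hd Hrb' Hm3' (- x)) as [_ D3].
  rewrite Derive_phi_odd, Lambda_phi_even in D3 by exact Hp.
  split; [exact F1 | split; [| split; [exact D1 |]]].
  - rewrite <- F3. unfold f3. rewrite Ropp_0. f_equal. f_equal. ring.
  - assert (D3' := is_derive_comp_opp _ 0 _ ltac:(rewrite Ropp_0; exact D3)).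
    replace (/ beta p * _)
      with (- (/ beta p * (1 / (p - 1) * - Derive (phi p) x + Lambda_phi p x))) by ring.
    eapply is_derive_ext; [| exact D3'].
    intros l. unfold f3. cbv beta. rewrite !Ropp_involutive. f_equal. f_equal. ring.
Qed.
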